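(* Let $A, B, C, F \in \mathbb{R}^{n\times n}$ with $A$ invertible, and suppose $\rho\left(\lvert CA^{-1}B\rvert\right) < 1$. Then the matrix equation $$AX + B\lvert CX\rvert = F$$ has exactly one solution $X \in \mathbb{R}^{n\times n}$.
   Context: $\rho(\cdot)$ is the spectral radius and $\lvert M\rvert$ the entrywise absolute value of a matrix $M$. *)

From HB Require Import structures.
From mathcomp Require Import all_boot all_order all_algebra.
From mathcomp Require Import complex.
From mathcomp Require Import classical_sets reals.
Set Implicit Arguments. Unset Strict Implicit. Unset Printing Implicit Defensive.
Import Order.TTheory GRing.Theory Num.Theory.
Local Open Scope ring_scope.
Local Open Scope classical_set_scope.

Definition mxabs (R : realType) (m n : nat) (M : 'M[R]_(m, n)) : 'M[R]_(m, n) :=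
  map_mx (fun x => `|x|) M.

Definition complex_eigenvalue (R : realType) (n : nat) (M : 'M[R]_n) (l : R[i]) : bool :=
  eigenvalue (map_mx (fun x : R => x%:C%C) M) l.

Definition spectral_radius (R : realType) (n : nat) (M : 'M[R]_n) : R :=
  sup [set Normc.normc l | l in [set l : R[i] | complex_eigenvalue M l]].

(* Write M := C A^-1 B.  X solves the equation iff Y := C X solves
   Y = C A^-1 F - M |Y| and X = A^-1 (F - B |Y|), so it suffices to solve this
   fixed-point equation uniquely.  Call t good if |M| w < t w for some positive
   vector w.  For good t the matrix t - |M| is inverse-positive; as the entries
   of det (t - |M|) adj (t - |M|) 1 are polynomial in t, this passes to the
   limit, so t is good as soon as all s > t are and det (t - |M|) <> 0, which
   holds for t > rho(|M|).  The good set is also open and contains all large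
   t, hence it contains c := (rho(|M|) + 1) / 2 < 1.  In the weighted norm
   max_ij |Y_ij| / w_i the map Y |-> C A^-1 F - M |Y| is then a c-contraction,
   and Banach's fixed point theorem concludes. *)

From HB Require Import structures.
From mathcomp Require Import all_boot all_order all_algebra.
From mathcomp Require Import complex.
From mathcomp Require Import real_closed.polyrcf.
From mathcomp Require Import lra.
From mathcomp Require Import all_classical all_reals all_analysis.
Import Order.TTheory GRing.Theory Num.Theory.
Local Open Scope ring_scope.
Set Implicit Arguments. Unset Strict Implicit.

Lemma exists_unique_transfer (T U : Type) (P : T -> Prop) (Q : U -> Prop)
    (f : T -> U) (g : U -> T) :
  (forall x, P x -> Q (f x)) -> (forall y, Q y -> P (g y)) ->
  (forall x, P x -> g (f x) = x) -> (exists! y, Q y) -> exists! x, P x.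
Proof.
move=> PQ QP gfK [y [Qy Q_uniq]]; exists (g y); split; first exact: QP.
by move=> x Px; rewrite -(gfK x Px) -(Q_uniq _ (PQ x Px)).
Qed.

Lemma scalar_sub_mulmxE (R : pzRingType) n (P : 'M[R]_n) (t : R)
    (x : 'cV[R]_n) i :
  ((t%:M - P) *m x) i 0 = t * x i 0 - (P *m x) i 0.
Proof. by rewrite mulmxBl mul_scalar_mx !mxE. Qed.

(* [t] exceeds the Collatz-Wielandt ratio [max_i (P w)_i / w_i] of some
   positive vector [w]. *)
Definition cw_bound (R : realFieldType) n (P : 'M[R]_n) (t : R) :=
  exists2 w : 'cV[R]_n,
    (forall i, 0 < w i 0) & (forall i, (P *m w) i 0 < t * w i 0).

Section CollatzWielandtBound.
Variables (R : realFieldType) (n : nat) (P : 'M[R]_n).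
Hypothesis P_ge0 : forall i j, 0 <= P i j.

Lemma cw_bound_le t t' : cw_bound P t -> t <= t' -> cw_bound P t'.
Proof.
move=> [w w_gt0 Pw] le_tt'; exists w => // i.
by apply: (lt_le_trans (Pw i)); rewrite ler_wpM2r // ltW.
Qed.

Lemma cw_bound_open t : cw_bound P t -> exists2 t', t' < t & cw_bound P t'.
Proof.
move=> [w w_gt0 Pw].
pose gap i := t * w i 0 - (P *m w) i 0.
have gap_gt0 i : 0 < gap i by rewrite subr_gt0.
pose d := (1 + \sum_i w i 0 / gap i)^-1.
have sum_ge0 : 0 <= \sum_i w i 0 / gap i.
  by rewrite sumr_ge0 // => i _; rewrite divr_ge0 // ltW.
have d_gt0 : 0 < d by rewrite invr_gt0 ltr_pwDl.
exists (t - d); first by rewrite ltrBlDr ltrDl.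
exists w => // i.
have : d < gap i / w i 0.
  rewrite /d -invf_div ltf_pV2 ?posrE ?ltr_pwDl ?divr_gt0 //.
  by rewrite (bigD1 i) //= lerDl sumr_ge0 // => k _; rewrite divr_ge0 // ltW.
by rewrite ltr_pdivlMr // mulrBl ltrBrDl -ltrBrDr.
Qed.

Lemma cw_bound_inverse_pos t (x : 'cV[R]_n) : cw_bound P t ->
  (forall i, 0 <= ((t%:M - P) *m x) i 0) -> forall i, 0 <= x i 0.
Proof.
move=> [w w_gt0 Pw] tPx_ge0 i0; rewrite leNgt; apply/negP => xi0_lt0.
have [i _ min_i] := @arg_minP _ _ 'I_n i0 xpredT (fun k => x k 0 / w k 0) isT.
set m := x i 0 / w i 0 in min_i.
have m_lt0 : m < 0.
  by apply: le_lt_trans (min_i i0 isT) _; rewrite pmulr_llt0 ?invr_gt0.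
have xi : x i 0 = m * w i 0 by rewrite /m divfK // gt_eqF.
have Px_ge : m * (P *m w) i 0 <= (P *m x) i 0.
  rewrite !mxE mulr_sumr; apply: ler_sum => k _.
  by rewrite mulrCA ler_wpM2l // -ler_pdivlMr //; exact: min_i.
have := tPx_ge0 i; rewrite scalar_sub_mulmxE subr_ge0 => Px_le.
(* [x >= m w] with [m < 0], so [(P x)_i >= m (P w)_i > m t w_i = t x_i]. *)
have : t * x i 0 < t * x i 0.
  rewrite {1}xi mulrCA; apply: lt_le_trans (le_trans Px_ge Px_le).
  by rewrite ltr_nM2l.
by rewrite ltxx.
Qed.

Lemma cw_bound_of_supersolution t (x : 'cV[R]_n) : (forall i, 0 <= x i 0) ->
  (forall i, 0 < ((t%:M - P) *m x) i 0) -> cw_bound P t.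
Proof.
move=> x_ge0 tPx_gt0.
have Px_ge0 i : 0 <= (P *m x) i 0.
  by rewrite mxE sumr_ge0 // => k _; rewrite mulr_ge0.
exists x => i; last by rewrite -subr_gt0 -scalar_sub_mulmxE.
rewrite lt_neqAle x_ge0 andbT; apply/eqP => xi0.
move: (tPx_gt0 i).
by rewrite scalar_sub_mulmxE -xi0 mulr0 sub0r oppr_gt0 ltNge Px_ge0.
Qed.

Lemma cw_bound_large : cw_bound P (1 + \sum_i \sum_j P i j).
Proof.
apply: (@cw_bound_of_supersolution _ (const_mx 1)) => i; first by rewrite mxE.
rewrite scalar_sub_mulmxE !mxE mulr1 subr_gt0.
under eq_bigr do rewrite mxE mulr1.
rewrite ltr_pwDl // [leRHS](bigD1 i) //= lerDl.
by rewrite sumr_ge0 // => k _; rewrite sumr_ge0.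
Qed.

End CollatzWielandtBound.

Section CharPolyEval.
Variables (R : comNzRingType) (n : nat) (P : 'M[R]_n) (s : R).

Lemma horner_char_poly_mx : map_mx (horner_eval s) (char_poly_mx P) = s%:M - P.
Proof.
apply/matrixP => i j; rewrite !mxE /= horner_evalE hornerD hornerN hornerC.
by case: (i == j); rewrite ?mulr1n ?mulr0n ?hornerX ?horner0.
Qed.

Lemma horner_char_poly : (char_poly P).[s] = \det (s%:M - P).
Proof. by rewrite -horner_char_poly_mx det_map_mx. Qed.

Lemma horner_adj_char_poly_mx i j :
  (\adj (char_poly_mx P) i j).[s] = \adj (s%:M - P) i j.
Proof. by rewrite -horner_char_poly_mx -map_mx_adj [in RHS]mxE. Qed.

End CharPolyEval.

Lemma horner_ge0_from_right (R : rcfType) (q : {poly R}) (t0 : R) :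
  (forall s, t0 < s -> 0 <= q.[s]) -> 0 <= q.[t0].
Proof.
move=> q_ge0; rewrite leNgt; apply/negP => q_lt0.
have e_gt0 : 0 < - q.[t0] by rewrite oppr_gt0.
have [d d_gt0 near_t0] := poly_cont t0 q e_gt0.
have t0_lt : t0 < t0 + d / 2 by rewrite ltrDl divr_gt0.
have : `|q.[t0 + d / 2] - q.[t0]| < - q.[t0].
  apply: near_t0; rewrite addrAC subrr add0r ger0_norm ?divr_ge0 ?ltW //.
  by rewrite ltr_pdivrMr // ltr_pMr // ltr1n.
have := q_ge0 _ t0_lt; rewrite ltr_norml => ? /andP[_ ?]; lra.
Qed.

Lemma cw_bound_closed (R : rcfType) n (P : 'M[R]_n) t0 :
  (forall i j, 0 <= P i j) ->
  \det (t0%:M - P) != 0 -> (forall s, t0 < s -> cw_bound P s) -> cw_bound P t0.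
Proof.
move=> P_ge0 det_t0 cw_right.
(* The factor [det (s - P)] makes [(s - P) v s] nonnegative whatever the sign
   of the determinant. *)
pose v s : 'cV[R]_n := \det (s%:M - P) *: (\adj (s%:M - P) *m const_mx 1).
have sPv s : (s%:M - P) *m v s = \det (s%:M - P) ^+ 2 *: const_mx 1.
  by rewrite /v -scalemxAr mulmxA mul_mx_adj mul_scalar_mx scalerA expr2.
have v_poly i : exists q : {poly R}, forall s, q.[s] = v s i 0.
  exists (char_poly P * \sum_j \adj (char_poly_mx P) i j) => s.
  rewrite hornerM horner_char_poly horner_sum !mxE; congr (_ * _).
  by apply: eq_bigr => j _; rewrite horner_adj_char_poly_mx !mxE mulr1.
have v_ge0 i : 0 <= v t0 i 0.
  have [q qE] := v_poly i; rewrite -qE.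
  apply: horner_ge0_from_right => s t0_lt_s.
  rewrite qE; apply: (cw_bound_inverse_pos P_ge0 (cw_right s t0_lt_s)) => k.
  by rewrite sPv !mxE mulr1 sqr_ge0.
apply: (cw_bound_of_supersolution P_ge0 v_ge0) => i.
by rewrite sPv !mxE mulr1 exprn_even_gt0.
Qed.

Lemma cw_bound_of_det (R : realType) n (P : 'M[R]_n) c :
  (forall i j, 0 <= P i j) ->
  (forall t, c <= t -> \det (t%:M - P) != 0) -> cw_bound P c.
Proof.
move=> P_ge0 det_ge_c; apply: contrapT => not_cw_c.
pose S := [set t | ~ cw_bound P t]%classic.
have S_ub : ubound S (1 + \sum_i \sum_j P i j).
  move=> t St; rewrite leNgt; apply/negP => /ltW le_t.
  exact: St (cw_bound_le (cw_bound_large P_ge0) le_t).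
have S_sup : has_sup S by split; [exists c | exists (1 + \sum_i \sum_j P i j)].
have c_le_sup : c <= sup S by exact: sup_upper_bound.
have cw_right t : sup S < t -> cw_bound P t.
  move=> sup_lt; apply: contrapT => St.
  by move: (sup_upper_bound S_sup St); rewrite leNgt sup_lt.
have cw_sup := cw_bound_closed P_ge0 (det_ge_c _ c_le_sup) cw_right.
have [t' t'_lt cw_t'] := cw_bound_open cw_sup.
suff : sup S <= t' by rewrite leNgt t'_lt.
apply: ge_sup; first by exists c.
move=> x Sx; rewrite leNgt; apply/negP => /ltW le_t'x.
exact: Sx (cw_bound_le cw_t' le_t'x).
Qed.

Section SpectralRadius.
Variables (R : realType) (n : nat) (P : 'M[R]_n).

Lemma complex_eigenvalue_real_root t :
  root (char_poly P) t -> complex_eigenvalue P t%:C%C.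
Proof.
move=> Pt; rewrite /complex_eigenvalue eigenvalue_root_char.
by rewrite -(map_char_poly (real_complex R)) rmorph_root.
Qed.

Lemma eigenvalue_norm_le_spectral_radius l :
  complex_eigenvalue P l -> Normc.normc l <= spectral_radius P.
Proof.
move=> Pl; apply: sup_upper_bound; last by exists l.
split; first by exists (Normc.normc l), l.
have [rs char_rs] :=
  closed_field_poly_normal (char_poly (map_mx (fun x : R => x%:C%C) P)).
exists (\big[Order.max/0]_(z <- rs) Normc.normc z) => _ [z Pz <-].
apply: le_bigmax_seq => //; move: Pz.
rewrite /= /complex_eigenvalue eigenvalue_root_char char_rs.
by rewrite (monicP (char_poly_monic _)) scale1r root_prod_XsubC.
Qed.

Lemma det_neq0_gt_spectral_radius t :
  spectral_radius P < t -> \det (t%:M - P) != 0.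
Proof.
move=> rho_lt; apply/negP => /eqP det0.
have Pt : root (char_poly P) t by rewrite /root horner_char_poly det0.
have := eigenvalue_norm_le_spectral_radius (complex_eigenvalue_real_root Pt).
rewrite /Normc.normc /= expr0n /= addr0 sqrtr_sqr => le_t.
have := ler_norm t; lra.
Qed.

End SpectralRadius.

Section MatrixNorm.
Variables (R : realDomainType) (m p : nat).

Lemma mx_norm_entry_le (Z : 'M[R]_(m, p)) i j : `|Z i j| <= `|Z|.
Proof.
by rewrite [leRHS]/Num.norm /= mx_normrE; exact: (le_bigmax _ _ (i, j)).
Qed.

Lemma mx_norm_le_entries (Z : 'M[R]_(m, p)) b :
  0 <= b -> (forall i j, `|Z i j| <= b) -> `|Z| <= b.
Proof.
move=> b_ge0 Zb; rewrite [leLHS]/Num.norm /= mx_normrE.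
by apply: bigmax_le => // -[i j] _; exact: Zb.
Qed.

End MatrixNorm.

Lemma mulmx_mxabs_lipschitz (R : realType) m p (N : 'M[R]_m)
    (Z1 Z2 : 'M[R]_(m, p)) c :
  0 <= c -> (forall i, \sum_k `|N i k| <= c) ->
  `|N *m mxabs Z1 - N *m mxabs Z2| <= c * `|Z1 - Z2|.
Proof.
move=> c_ge0 N_rows; apply: mx_norm_le_entries; first by rewrite mulr_ge0.
move=> i j; rewrite -mulmxBr mxE.
apply: le_trans (ler_norm_sum _ _ _) _.
apply: (@le_trans _ _ (\sum_k `|N i k| * `|Z1 - Z2|));
  last by rewrite -mulr_suml ler_wpM2r.
apply: ler_sum => k _; rewrite normrM ler_wpM2l // !mxE.
apply: le_trans (ler_dist_dist _ _) _.
by have := mx_norm_entry_le (Z1 - Z2) k j; rewrite !mxE.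
Qed.

(* A copy of ['M[R]_(m, p)] on which the complete normed module structure that
   Banach's fixed point theorem needs is declared. *)
Definition complete_mx (R : realType) m p := 'M[R]_(m, p).
HB.instance Definition _ (R : realType) m p :=
  NormedModule.copy (complete_mx R m p) 'M[R]_(m, p).
HB.instance Definition _ (R : realType) m p :=
  isPointed.Build (complete_mx R m p) 0.
HB.instance Definition _ (R : realType) m p :=
  Uniform_isComplete.Build (complete_mx R m p) (@mx_complete R m p).

Lemma mxabs_fixpoint_rowsum (R : realType) m p (N : 'M[R]_m)
    (H : 'M[R]_(m, p)) c :
  c < 1 -> (forall i, \sum_k `|N i k| <= c) -> exists! Z, Z = H - N *m mxabs Z.
Proof.
move=> c_lt1 N_rows; set c' := Num.max c 0.
have c'_ge0 : 0 <= c' by rewrite le_max lexx orbT.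
have N_rows' i : \sum_k `|N i k| <= c' by rewrite le_max N_rows.
pose f := totalfun_ [set: complete_mx R m p]
  (fun Z => H - N *m mxabs Z : complete_mx R m p).
have f_contr : is_contraction f.
  exists (NngNum c'_ge0); split; first by rewrite gt_max c_lt1 ltr01.
  move=> [Z1 Z2] _ /=; rewrite /totalfun_ opprB addrC addrA subrK.
  by rewrite distrC; exact: mulmx_mxabs_lipschitz.
have [Z _ fZ] := banach_fixed_point f_contr closedT (ex_intro _ 0 I).
exists Z; split => // Z' fZ'.
exact: (contraction_fixpoint_unique f_contr I I fZ fZ').
Qed.

Lemma mxabs_diag_mul (R : realType) m p (d : 'rV[R]_m) (Z : 'M[R]_(m, p)) :
  (forall i, 0 <= d 0 i) -> mxabs (diag_mx d *m Z) = diag_mx d *m mxabs Z.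
Proof.
by move=> d_ge0; apply/matrixP => i j; rewrite !mul_diag_mx !mxE normrM ger0_norm.
Qed.

Lemma diag_mx_mulV (R : fieldType) m (d : 'rV[R]_m) :
  (forall i, d 0 i != 0) -> diag_mx d *m diag_mx (map_mx GRing.inv d) = 1%:M.
Proof.
move=> d_neq0; rewrite mulmx_diag -diag_const_mx; congr diag_mx.
by apply/rowP => j; rewrite !mxE divff.
Qed.

Lemma mxabs_fixpoint_cw (R : realType) m p (M : 'M[R]_m) (G : 'M[R]_(m, p)) c :
  cw_bound (mxabs M) c -> c < 1 -> exists! Y, Y = G - M *m mxabs Y.
Proof.
move=> [w w_gt0 Mw] c_lt1.
pose D := diag_mx w^T; pose D' := diag_mx (map_mx GRing.inv w^T).
have DD' : D *m D' = 1%:M by apply: diag_mx_mulV => i; rewrite mxE gt_eqF.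
have absD (Z : 'M[R]_(m, p)) : mxabs (D *m Z) = D *m mxabs Z.
  by apply: mxabs_diag_mul => i; rewrite mxE ltW.
have absD' (Z : 'M[R]_(m, p)) : mxabs (D' *m Z) = D' *m mxabs Z.
  by apply: mxabs_diag_mul => i; rewrite !mxE invr_ge0 ltW.
have N_rows i : \sum_k `|(D' *m M *m D) i k| <= c.
  have -> : \sum_k `|(D' *m M *m D) i k| = (mxabs M *m w) i 0 / w i 0.
    rewrite mul_mx_diag mul_diag_mx [in RHS]mxE mulr_suml.
    apply: eq_bigr => k _.
    rewrite !mxE !normrM normfV (gtr0_norm (w_gt0 i)) (gtr0_norm (w_gt0 k)).
    by rewrite -mulrA mulrC.
  by rewrite ler_pdivrMr // ltW.
apply: (exists_unique_transfer (f := mulmx D') (g := mulmx D)) _ _ _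
  (mxabs_fixpoint_rowsum (D' *m G) c_lt1 N_rows).
- move=> Y YE; rewrite {1}YE mulmxBr absD' !mulmxA.
  by rewrite -(mulmxA _ D D') DD' mulmx1.
- by move=> Z ZE; rewrite {1}ZE mulmxBr absD !mulmxA DD' !mul1mx.
- by move=> Y _; rewrite mulmxA DD' mul1mx.
Qed.

Unset Implicit Arguments. Set Strict Implicit.

Theorem theorem4p6 (R : realType) (n : nat) (A B C F : 'M[R]_n) :
  A \in unitmx ->
  spectral_radius (mxabs (C *m invmx A *m B)) < 1 ->
  exists! X : 'M[R]_n, A *m X + B *m mxabs (C *m X) = F.
Proof.
move=> A_unit rho_lt1; set M := C *m invmx A *m B in rho_lt1 *.
set rho := spectral_radius (mxabs M) in rho_lt1.
have absM_ge0 i j : 0 <= mxabs M i j by rewrite mxE.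
have cw_M : cw_bound (mxabs M) ((rho + 1) / 2).
  apply: cw_bound_of_det absM_ge0 _ => t le_t.
  by apply: det_neq0_gt_spectral_radius; rewrite -/rho; lra.
have c_lt1 : (rho + 1) / 2 < 1 by lra.
have Y_uniq := mxabs_fixpoint_cw (C *m invmx A *m F) cw_M c_lt1.
have solE X : A *m X + B *m mxabs (C *m X) = F <->
    X = invmx A *m (F - B *m mxabs (C *m X)).
  split=> XE; first by rewrite -XE addrK mulKmx.
  by rewrite {1}XE mulKVmx // subrK.
apply: (exists_unique_transfer (f := mulmx C)
  (g := fun Y => invmx A *m (F - B *m mxabs Y))) _ _ _ Y_uniq.
- by move=> X /solE XE; rewrite {1}XE !mulmxBr !mulmxA.
- move=> Y YE; apply/solE.
  suff -> : C *m (invmx A *m (F - B *m mxabs Y)) = Y by [].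
  by rewrite {2}YE !mulmxBr !mulmxA.
- by move=> X /solE <-.
Qed.
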